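(* Let $\mathcal{G}=(\mathcal{V},\mathcal{E})$ be a DAG with treatment $A$ and outcome $Y$ and a linear Gaussian causal model on it as in the context. Let $K\subseteq\mathcal{V}\setminus\{A,Y\}$ be any set of variables (not necessarily a valid adjustment set) and let $P$ be a precision variable in $\mathcal{G}$. Then the bias of the OLS estimator is invariant to adding $P$: $B(\hat\tau_K)=B(\hat\tau_{K\cup P})$.
   Context: $\mathcal{G}=(\mathcal{V},\mathcal{E})$ is a DAG containing treatment $A$ and outcome $Y$ with an edge $A\to Y$; variables follow $V_i=\sum_{V_j\in\mathrm{Pa}(V_i,\mathcal{G})}\beta_{ij}V_j+\epsilon_i$ with jointly independent $\epsilon_i\sim\mathcal{N}(0,\sigma_i^2)$, Markov and faithful to $\mathcal{G}$; no variable of $\mathcal{V}\setminus\{A,Y\}$ is a descendant of $A$. $\tau=\frac{\partial}{\partial a}E\{Y\mid do(A=a)\}$. $\hat\tau_K$ is the OLS coefficient of $A$ when regressing $Y$ on $A$ and $K$, and $B(\hat\tau_K)=E(\hat\tau_K)-\tau$. $\mathcal{G}'$ is $\mathcal{G}$ with $A\to Y$ removed. A precision variable is $V\in\mathcal{V}\setminus\{A,Y\}$ that in $\mathcal{G}'$ is d-separated from $A$ given every $K\subseteq\mathcal{V}\setminus\{A,Y\}$ and d-connected to $Y$ given some $L\subseteq\mathcal{V}\setminus\{A,Y\}$. *)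

From HB Require Import structures.
From mathcomp Require Import all_boot all_order all_algebra.
From mathcomp Require Import all_classical all_reals all_analysis.
Set Implicit Arguments. Unset Strict Implicit. Unset Printing Implicit Defensive.
Import Order.TTheory GRing.Theory Num.Theory.
Local Open Scope ring_scope.

Section Defs.
Variable n : nat.
Implicit Types (E : rel 'I_n).

(* A DAG on vertex set 'I_n: edge relation E (E u v means u -> v) with no
   directed cycle. *)
Definition acyclic E := forall u v, E u v -> ~~ connect E v u.

Definition adj E (u v : 'I_n) := E u v || E v u.

Definition triple_open E (S : {set 'I_n}) (u w v : 'I_n) : Prop :=
  if E u w && E v w then exists2 d, d \in S & connect E w d
  else w \notin S.

Definition dconnected E (x y : 'I_n) (S : {set 'I_n}) : Prop :=
  exists p : seq 'I_n,
    [/\ uniq (x :: p), path (adj E) x p, last x p = y &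
        forall i, (i.+2 < size (x :: p))%N ->
          triple_open E S (nth x (x :: p) i) (nth x (x :: p) i.+1)
                          (nth x (x :: p) i.+2)].

Definition dseparated E x y S := ~ dconnected E x y S.

Definition remove_edge E (A Y : 'I_n) : rel 'I_n :=
  fun u v => E u v && ~~ ((u == A) && (v == Y)).

Definition precision_var E (A Y P : 'I_n) : Prop :=
  [/\ P != A, P != Y,
      (forall K : {set 'I_n}, A \notin K -> Y \notin K ->
          dseparated (remove_edge E A Y) P A K) &
      (exists L : {set 'I_n}, [/\ A \notin L, Y \notin L &
          dconnected (remove_edge E A Y) P Y L])].

Variable R : realType.

(* Linear SEM  V = Bm V + eps, Bm i j = beta_{ij} (coefficient of V_j in the
   equation of V_i), eps ~ N(0, diag sigma2) independent.  Covariance: *)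
Definition sem_cov (Bm : 'M[R]_n) (sigma2 : 'rV[R]_n) : 'M[R]_n :=
  invmx (1%:M - Bm) *m diag_mx sigma2 *m (invmx (1%:M - Bm))^T.

(* partial covariance of x and y given S (Gaussian: zero iff x _||_ y | S) *)
Definition pcov (Sig : 'M[R]_n) (x y : 'I_n) (S : {set 'I_n}) : R :=
  let s := enum S in
  let m := size s in
  let SSS := \matrix_(i < m, j < m) Sig (nth x s i) (nth x s j) in
  let SxS := \row_(j < m) Sig x (nth x s j) in
  let SSy := \col_(i < m) Sig (nth x s i) y in
  Sig x y - (SxS *m invmx SSS *m SSy) ord0 ord0.

Definition markov_faithful E (Sig : 'M[R]_n) : Prop :=
  forall (x y : 'I_n) (S : {set 'I_n}), x != y -> x \notin S -> y \notin S ->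
    (dseparated E x y S <-> pcov Sig x y S = 0).

(* E(tau_hat_K): expectation of the OLS coefficient of A in the regression of
   Y on (A, K); for the zero-mean jointly Gaussian model this equals the
   population least-squares coefficient  [Sigma_XX^{-1} Sigma_XY]_A,
   X = (A, K). *)
Definition ols_coef (Sig : 'M[R]_n) (A Y : 'I_n) (K : {set 'I_n}) : R :=
  let s := A :: enum K in
  let m := (size (enum K)).+1 in
  let SXX := \matrix_(i < m, j < m) Sig (nth A s i) (nth A s j) in
  let SXY := \col_(i < m) Sig (nth A s i) Y in
  (invmx SXX *m SXY) ord0 ord0.

(* Interventional mean E{V | do(A = a)}: the equation for A is replaced by
   A := a; the noises have mean zero. *)
Definition do_mean (Bm : 'M[R]_n) (A : 'I_n) (a : R) : 'cV[R]_n :=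
  let Bdo := \matrix_(i, j) (if i == A then 0 else Bm i j) in
  invmx (1%:M - Bdo) *m (\col_i (if i == A then a else 0)).

(* tau = d/da E{Y | do(A = a)}  (affine in a, so evaluated at a = 0) *)
Definition causal_effect (Bm : 'M[R]_n) (A Y : 'I_n) : R :=
  derive1 (fun a : R => do_mean Bm A a Y ord0) 0.

Definition ols_bias (Bm : 'M[R]_n) (sigma2 : 'rV[R]_n) (A Y : 'I_n)
  (K : {set 'I_n}) : R :=
  ols_coef (sem_cov Bm sigma2) A Y K - causal_effect Bm A Y.

End Defs.

From HB Require Import structures.
From mathcomp Require Import all_boot all_order all_algebra.
From mathcomp Require Import all_classical all_reals all_analysis.
Import Order.TTheory GRing.Theory Num.Theory.
Set Implicit Arguments. Unset Strict Implicit. Unset Printing Implicit Defensive.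
Local Open Scope ring_scope.

(* By Frisch-Waugh-Lovell, the OLS coefficient of [A] given covariates [K] is
   Cov(r, Y) / Cov(r, A), where [r] is the population residual of [A]
   regressed on [K].  A precision variable [P] is d-separated from [A] given
   [K] in G'; since the only proper descendant of [A] is [Y], a path that
   d-connects [P] and [A] in G never uses the edge A -> Y, so [P] and [A] are
   d-separated in G too, and by faithfulness [P] is uncorrelated with [r].
   Then [r] is also the residual of [A] on [K] and [P], so both regressions
   give the same coefficient, while the causal effect does not involve [K]. *)

Section SelectionMatrix.
Variables (R : pzSemiRingType) (n : nat).

Definition selmx (s : seq 'I_n) (x0 : 'I_n) : 'M[R]_(size s, n) :=
  \matrix_(k, j) (nth x0 s k == j)%:R.

Lemma mul_selmx s x0 m (M : 'M[R]_(n, m)) k i :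
  (selmx s x0 *m M) k i = M (nth x0 s k) i.
Proof.
rewrite mxE (bigD1 (nth x0 s k)) //= big1 => [|j /negbTE nj].
  by rewrite mxE eqxx mul1r addr0.
by rewrite mxE eq_sym nj mul0r.
Qed.

Lemma mul_tr_selmx s x0 m (M : 'M[R]_(m, n)) k i :
  (M *m (selmx s x0)^T) k i = M k (nth x0 s i).
Proof.
rewrite mxE (bigD1 (nth x0 s i)) //= big1 => [|j /negbTE nj].
  by rewrite !mxE eqxx mulr1 addr0.
by rewrite !mxE eq_sym nj mulr0.
Qed.

Lemma selmx_tr_uniq s x0 : uniq s -> selmx s x0 *m (selmx s x0)^T = 1%:M.
Proof. by move=> us; apply/matrixP => k l; rewrite mul_tr_selmx !mxE nth_uniq. Qed.

End SelectionMatrix.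

Section Regression.
Variables (R : realType) (n : nat) (S : 'M[R]_n).
Hypothesis S_sym : forall i j, S i j = S j i.
Hypothesis S_pd : forall x : 'rV[R]_n, x != 0 -> 0 < (x *m S *m x^T) 0 0.

Definition cov_block (s : seq 'I_n) x0 :=
  \matrix_(i < size s, j < size s) S (nth x0 s i) (nth x0 s j).

Definition cov_col (s : seq 'I_n) x0 y := \col_(i < size s) S (nth x0 s i) y.

(* The population regression coefficients of [y] on the variables [s], as a
   row vector indexed by all of ['I_n]; [x0] is only a default for [nth]. *)
Definition regr (s : seq 'I_n) x0 y : 'rV[R]_n :=
  (invmx (cov_block s x0) *m cov_col s x0 y)^T *m selmx R s x0.

Lemma cov_blockE s x0 : cov_block s x0 = selmx R s x0 *m S *m (selmx R s x0)^T.
Proof. by apply/matrixP => k l; rewrite mul_tr_selmx mul_selmx mxE. Qed.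

Lemma cov_block_unit s x0 : uniq s -> cov_block s x0 \in unitmx.
Proof.
move=> us; rewrite cov_blockE unitmxE unitfE; apply/negP => /det0P [v vnz vS0].
have vsel_nz : v *m selmx R s x0 != 0.
  apply: contra vnz => /eqP v0.
  by rewrite -[v]mulmx1 -(selmx_tr_uniq R x0 us) mulmxA v0 mul0mx.
have := S_pd vsel_nz.
have -> : v *m selmx R s x0 *m S *m (v *m selmx R s x0)^T
    = v *m (selmx R s x0 *m S *m (selmx R s x0)^T) *m v^T.
  by rewrite trmx_mul !mulmxA.
by rewrite vS0 !mul0mx mxE ltxx.
Qed.

Lemma regr_out s x0 y j : j \notin s -> regr s x0 y 0 j = 0.
Proof.
move=> js; rewrite mxE big1 // => k _; rewrite !mxE.
by case: eqP => [kj|]; [rewrite -kj mem_nth in js|rewrite mulr0].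
Qed.

Lemma regr_normal s x0 y i : uniq s -> i \in s -> (regr s x0 y *m S) 0 i = S i y.
Proof.
move=> us si; have ii : (index i s < size s)%N by rewrite index_mem.
rewrite -(nth_index x0 si) -[index i s]/(nat_of_ord (Ordinal ii)) -mul_tr_selmx.
have SXX_sym : (cov_block s x0)^T = cov_block s x0.
  by apply/matrixP => k l; rewrite !mxE S_sym.
rewrite /regr -!mulmxA (mulmxA (selmx R s x0)) -cov_blockE.
by rewrite -[X in _ *m X]SXX_sym -trmx_mul mulmxA mulmxV ?cov_block_unit // mul1mx !mxE.
Qed.

Lemma pcovE x y (K : {set 'I_n}) :
  pcov S x y K = S x y - (regr (enum K) x y *m S) 0 x.
Proof.
rewrite /pcov /regr -mulmxA -mulmxA !mxE; congr (_ - _).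
by apply: eq_bigr => k _; rewrite mul_selmx !mxE S_sym mulrC.
Qed.

Lemma ols_coefE A Y (K : {set 'I_n}) : A \notin K ->
  ols_coef S A Y K = regr (A :: enum K) A Y 0 A.
Proof.
move=> AK; have us : uniq (A :: enum K) by rewrite /= mem_enum AK enum_uniq.
have := mul_tr_selmx A (regr (A :: enum K) A Y) 0 (ord0 : 'I_(size (A :: enum K))).
by rewrite /= /regr -mulmxA selmx_tr_uniq // mulmx1 mxE => <-.
Qed.

(* Frisch-Waugh-Lovell: the coefficient of [A] in a regression on [T] is
   Cov(r, Y) / Cov(r, A) for any [r] supported on [T], with [r_A = 1], that
   is uncorrelated with the other regressors, e.g. the residual of [A]. *)
Lemma regr_coef_residual (T : seq 'I_n) (c r : 'rV[R]_n) A Y :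
  (forall j, j \notin T -> c 0 j = 0) ->
  (forall i, i \in T -> (c *m S) 0 i = S i Y) ->
  (forall j, j \notin T -> r 0 j = 0) -> r 0 A = 1 ->
  (forall i, i \in T -> i != A -> (r *m S) 0 i = 0) ->
  c 0 A = (\sum_j r 0 j * S j Y) / (r *m S) 0 A.
Proof.
move=> c_out c_normal r_out rA r_orth.
have SrT j : (S *m r^T) j 0 = (r *m S) 0 j.
  by rewrite !mxE; apply: eq_bigr => k _; rewrite !mxE S_sym mulrC.
have cov_r (x : 'rV_n) : (forall j, j \notin T -> x 0 j = 0) ->
    (x *m S *m r^T) 0 0 = x 0 A * (r *m S) 0 A.
  move=> x_out; rewrite -mulmxA mxE (bigD1 A) //= SrT big1 ?addr0 // => j jA.
  rewrite SrT; case: (boolP (j \in T)) => jT.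
    by rewrite r_orth ?mulr0.
  by rewrite x_out ?mul0r.
have r_nz : r != 0 by apply: contra_neq (@oner_neq0 R) => r0; rewrite -rA r0 mxE.
have rSA_gt0 : 0 < (r *m S) 0 A by rewrite -[_ 0 A]mul1r -rA -cov_r // S_pd.
rewrite -(mulfK (lt0r_neq0 rSA_gt0) (c 0 A)) -cov_r // mxE; congr (_ / _).
apply: eq_bigr => j _; rewrite [r^T _ _]mxE mulrC.
by case: (boolP (j \in T)) => jT; [rewrite c_normal | rewrite r_out ?mul0r].
Qed.

Lemma ols_coef_setU1 A Y P (K : {set 'I_n}) :
  A \notin K -> P != A -> pcov S P A K = 0 ->
  ols_coef S A Y (K :|: [set P]) = ols_coef S A Y K.
Proof.
move=> AK PA pc0.
have g_out j : j \notin enum K -> regr (enum K) P A 0 j = 0 by apply: regr_out.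
have g_normal i : i \in K :|: [set P] -> (regr (enum K) P A *m S) 0 i = S i A.
  rewrite !inE => /orP[iK|/eqP->]; first by rewrite regr_normal ?enum_uniq ?mem_enum.
  by apply/esym/eqP; rewrite -subr_eq0 -pcovE pc0.
move: (regr _ _ _) g_out g_normal => g g_out g_normal.
set r := delta_mx 0 A - g.
have rA : r 0 A = 1 by rewrite !mxE !eqxx g_out ?mem_enum // subr0.
have r_out j : j \notin A :: enum K -> r 0 j = 0.
  by rewrite inE negb_or => /andP[jA jK]; rewrite !mxE (negbTE jA) g_out ?subrr.
have r_orth i : i \in K :|: [set P] -> (r *m S) 0 i = 0.
  move=> iKP; rewrite mulmxBl -rowE mxE [row _ _ _ _]mxE mxE.
  by rewrite g_normal // S_sym subrr.
suff coefE (L : {set 'I_n}) : A \notin L -> K \subset L -> L \subset K :|: [set P] ->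
    ols_coef S A Y L = (\sum_j r 0 j * S j Y) / (r *m S) 0 A.
  have AKP : A \notin K :|: [set P] by rewrite !inE negb_or AK eq_sym PA.
  by rewrite !coefE //; rewrite ?finset.subsetUl ?subxx.
move=> AL KL LKP; have uL : uniq (A :: enum L) by rewrite /= mem_enum AL enum_uniq.
rewrite ols_coefE //; apply: regr_coef_residual rA _.
- exact: regr_out.
- by move=> i iL; rewrite regr_normal.
- move=> j; rewrite !inE !mem_enum => /norP[jA jL]; apply: r_out.
  by rewrite !inE mem_enum negb_or jA; apply: contra jL; apply: (fintype.subsetP KL).
- move=> i; rewrite inE mem_enum => /predU1P[->|iL _]; first by rewrite eqxx.
  exact/r_orth/(fintype.subsetP LKP).
Qed.

End Regression.

Lemma diag_form_gt0 (R : realFieldType) n (d u : 'rV[R]_n) :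
  (forall i, 0 < d 0 i) -> u != 0 -> 0 < (u *m diag_mx d *m u^T) 0 0.
Proof.
move=> d_gt0 u_nz; have [i ui] : exists i, u 0 i != 0.
  apply/existsP; apply: contraNT u_nz => /existsPn u0.
  by apply/eqP/rowP => k; move/negPn/eqP: (u0 k) ->; rewrite mxE.
have term_ge0 k : 0 <= u 0 k * d 0 k * u 0 k.
  by rewrite mulrAC -expr2 mulr_ge0 ?sqr_ge0 ?ltW.
rewrite mul_mx_diag mxE (bigD1 i) //= !mxE ltr_wpDr ?sumr_ge0 // => [k _|].
  by rewrite !mxE.
by rewrite mulrAC -expr2 mulr_gt0 ?exprn_even_gt0 ?ui ?orbT.
Qed.

Section LinearSEM.
Variables (R : realType) (n : nat) (E : rel 'I_n) (Bm : 'M[R]_n).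
Hypothesis E_acyclic : acyclic E.
Hypothesis Bm_supp : forall i j, ~~ E j i -> Bm i j = 0.

Lemma card_connect_lt i j : E j i ->
  (#|[set k | connect E i k]| < #|[set k | connect E j k]|)%N.
Proof.
move=> Eji; apply: proper_card; apply/properP; split.
  by apply/fintype.subsetP => k; rewrite !inE; apply: connect_trans (connect1 Eji).
by exists j; rewrite inE ?connect0 ?E_acyclic.
Qed.

(* The kernel is trivial: [v = v Bm] expresses each [v_j] through the [v_i]
   of the children [i] of [j], so [v] vanishes by induction on descendants. *)
Lemma unitmx_1_sub_dag : (1%:M - Bm) \in unitmx.
Proof.
rewrite unitmxE unitfE; apply/negP => /det0P [v v_nz].
rewrite mulmxBr mulmx1 => /eqP; rewrite subr_eq0 => /eqP vB.
suff v0 N j : #|[set k | connect E j k]| = N -> v 0 j = 0.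
  by apply/negP: v_nz; rewrite negbK; apply/eqP/rowP => j; rewrite (v0 _ j erefl) mxE.
elim/ltn_ind: N j => N IH j cardj; rewrite vB mxE big1 // => i _.
have [Eji|nEji] := boolP (E j i); last by rewrite Bm_supp ?mulr0.
by rewrite (IH _ _ i erefl) ?mul0r // -cardj card_connect_lt.
Qed.

Variable sigma2 : 'rV[R]_n.
Hypothesis sigma2_gt0 : forall i, 0 < sigma2 ord0 i.

Lemma sem_cov_sym i j : sem_cov Bm sigma2 i j = sem_cov Bm sigma2 j i.
Proof.
have trS : (sem_cov Bm sigma2)^T = sem_cov Bm sigma2.
  by rewrite /sem_cov !trmx_mul trmxK tr_diag_mx mulmxA.
by rewrite -{1}trS mxE.
Qed.

Lemma sem_cov_pd (x : 'rV[R]_n) : x != 0 ->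
  0 < (x *m sem_cov Bm sigma2 *m x^T) 0 0.
Proof.
move=> x_nz; set M := invmx (1%:M - Bm).
have M_unit : M \in unitmx by rewrite unitmx_inv unitmx_1_sub_dag.
have -> : x *m sem_cov Bm sigma2 *m x^T = x *m M *m diag_mx sigma2 *m (x *m M)^T.
  by rewrite /sem_cov trmx_mul !mulmxA.
apply: diag_form_gt0 => //; apply: contra x_nz => /eqP xM0.
by rewrite -(mulmxK M_unit x) xM0 mul0mx.
Qed.

End LinearSEM.

Lemma connect_remove_edge n (E : rel 'I_n) (A Y w d : 'I_n) :
  ~~ connect E A d -> connect E w d -> connect (remove_edge E A Y) w d.
Proof.
move=> nAd /connectP[s]; elim: s w => [|a s IH] w /=; first by move=> _ ->.
case/andP=> Ewa ps ld; apply: connect_trans (IH a ps ld); apply: connect1.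
rewrite /remove_edge Ewa; apply: contra nAd => /andP[/eqP wA _].
by apply/connectP; exists (a :: s); rewrite //= -wA Ewa.
Qed.

Section RemoveTreatmentEdge.
Variables (n : nat) (E : rel 'I_n) (A Y : 'I_n) (K : {set 'I_n}).
Hypothesis E_AY : E A Y.
Hypothesis A_desc : forall v, v != A -> v != Y -> ~~ connect E A v.
Hypothesis AK : A \notin K.
Hypothesis YK : Y \notin K.

Local Notation E' := (remove_edge E A Y).

Lemma not_connect_A_mem d : d \in K -> ~~ connect E A d.
Proof.
by move=> dK; apply: A_desc; [apply: contraNneq AK|apply: contraNneq YK] => <-.
Qed.

Lemma triple_open_remove_edge u w v :
  u != A -> triple_open E K u w v -> triple_open E' K u w v.
Proof.
rewrite /triple_open /remove_edge => /negbTE->; rewrite andbT.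
have [/andP[_ /eqP->]|_] := boolP ((v == A) && (w == Y)); first by rewrite /= !andbF.
rewrite andbT; case: ifP => // _ [d dK wd]; exists d => //.
exact: connect_remove_edge (not_connect_A_mem dK) wd.
Qed.

(* A path may not enter [A] through the edge [A -> Y]: the triple before it
   would be a collider at [Y] (closed, since [Y] has no descendant in [K]) or
   would reach a third descendant of [A]. *)
Lemma not_triple_open_into_A w :
  adj E w Y -> w != A -> w != Y -> ~ triple_open E K w Y A.
Proof.
move=> adj_wY wA wY; rewrite /triple_open E_AY andbT.
case: ifP => [_ [d dK Yd]|nEwY _].
  by have := not_connect_A_mem dK; rewrite (connect_trans (connect1 E_AY) Yd).
move: adj_wY; rewrite /adj nEwY /= => EYw.
by have := A_desc wA wY; rewrite (connect_trans (connect1 E_AY) (connect1 EYw)).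
Qed.

Lemma dconnected_remove_edge x :
  x != Y -> dconnected E x A K -> dconnected E' x A K.
Proof.
move=> xY [p [up pth lst open]]; move/(pathP x): pth => pth.
have notA i : (i < size p)%N -> nth x (x :: p) i != A.
  have <- : nth x (x :: p) (size p) = A by rewrite (nth_last x (x :: p)) /= lst.
  by move=> ip; rewrite nth_uniq //= ?ltn_eqF // ltnW.
have no_YA i : (i < size p)%N -> nth x (x :: p) i = Y -> nth x p i = A -> False.
  case: i => [|j] ip /= uY vA; first by move: xY; rewrite uY eqxx.
  have jp : (j < size p)%N by rewrite ltnW.
  have := open j ip; rewrite /= uY vA; apply: not_triple_open_into_A.
  - by have := pth j jp; rewrite uY.
  - exact: notA.
  - by rewrite -uY -[nth x p j]/(nth x (x :: p) j.+1) nth_uniq //= ?ltn_eqF // ltnW.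
exists p; split=> // [|i ip]; last first.
  by apply: triple_open_remove_edge (open i ip); apply/notA/ltnW.
apply/(pathP x) => i ip; rewrite /adj /remove_edge (negbTE (notA i ip)) /= andbT.
have := pth i ip; rewrite /adj; case/orP=> [->//|Evu]; rewrite Evu /=.
by apply/orP; right; apply/negP => /andP[/eqP vA /eqP uY]; apply: no_YA i ip uY vA.
Qed.

End RemoveTreatmentEdge.

Theorem lemmaB7 (R : realType) (n : nat) (E : rel 'I_n)
    (Bm : 'M[R]_n) (sigma2 : 'rV[R]_n) (A Y P : 'I_n) (K : {set 'I_n}) :
  acyclic E ->
  E A Y ->
  (forall i j, ~~ E j i -> Bm i j = 0) ->
  (forall i, 0 < sigma2 ord0 i) ->
  markov_faithful E (sem_cov Bm sigma2) ->
  (forall v, v != A -> v != Y -> ~~ connect E A v) ->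
  A \notin K -> Y \notin K ->
  precision_var E A Y P ->
  ols_bias Bm sigma2 A Y K = ols_bias Bm sigma2 A Y (K :|: [set P]).
Proof.
move=> acyc EAY Bsupp spos mf desc AK YK [PA PY sepP' _].
rewrite /ols_bias; congr (_ - _).
have [PK|PK] := boolP (P \in K).
  by rewrite (finset.setUidPl _) // finset.sub1set.
have sepP : dseparated E P A K.
  by move/(dconnected_remove_edge EAY desc AK YK PY); apply: sepP'.
have pcov0 : pcov (sem_cov Bm sigma2) P A K = 0 by apply/(mf P A K PA PK AK).
have S_pd := sem_cov_pd acyc Bsupp spos.
by rewrite (ols_coef_setU1 (@sem_cov_sym _ _ _ _) S_pd _ AK PA pcov0).
Qed.
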